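(* Let $n\geq 1$, let $G$ be a group, and suppose that $S$ is a totally symmetric subset of $G$ with $|S| = n$. If the elements of $S$ have finite order, then $|G|\geq 2^{n-1}n!$.
   Context: A totally symmetric subset of a group $G$ is a finite subset $\{g_1,\ldots,g_n\}$ of $G$ such that (1) the elements $g_i$ pairwise commute, and (2) for every permutation $\sigma\in S_n$ there exists $h\in G$ with $hg_ih^{-1}=g_{\sigma(i)}$ for all $1\leq i\leq n$. *)

From mathcomp Require Import all_boot all_fingroup.
Set Implicit Arguments. Unset Strict Implicit. Unset Printing Implicit Defensive.

Record is_group (G : Type) (mul : G -> G -> G) (one : G) (inv : G -> G) : Prop :=
  IsGroup {
    grp_mulA : forall x y z, mul x (mul y z) = mul (mul x y) z;
    grp_mul1g : forall x, mul one x = x;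
    grp_mulVg : forall x, mul (inv x) x = one
  }.

Definition gpow (G : Type) (mul : G -> G -> G) (one : G) (x : G) (k : nat) : G :=
  iter k (mul x) one.

(* g : 'I_n -> G injective enumerates a totally symmetric subset
   {g_0, ..., g_(n-1)} of size n. *)
Definition totally_symmetric (G : Type) (mul : G -> G -> G) (inv : G -> G)
  (n : nat) (g : 'I_n -> G) : Prop :=
  injective g /\
  (forall i j, mul (g i) (g j) = mul (g j) (g i)) /\
  (forall s : 'S_n, exists h : G,
      forall i, mul (mul h (g i)) (inv h) = g (s i)).

Definition card_ge (G : Type) (m : nat) : Prop :=
  exists f : 'I_m -> G, injective f.

From mathcomp Require Import all_boot all_fingroup.
Set Implicit Arguments. Unset Strict Implicit. Unset Printing Implicit Defensive.

(* Write P(A) for the product of the g_i with i in A.  For a fixed index a, the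
   products P(A) with a \notin A are pairwise distinct: if P(A) = P(B) and
   i \in A :\: B, conjugating by an element that swaps g_i and g_a fixes P(B)
   but turns P(A) = g_i P(A :\ i) into g_a P(A :\ i), whence g_i = g_a.  If h_s
   conjugates every g_k into g_(s k), so does h_s P(A), as P(A) commutes with
   every g_k; hence h_s P(A) determines s, and then P(A) and A.  This gives
   n! 2^(n-1) distinct elements h_s P(A). *)

Lemma card_ge_injective_in (G : Type) (T : finType) (D : {set T}) (f : T -> G) :
  {in D &, injective f} -> card_ge G #|D|.
Proof.
move=> f_inj; exists (fun i => f (enum_val i)) => i j /f_inj eq_ij.
exact/enum_val_inj/eq_ij/enum_valP/enum_valP.
Qed.

Lemma subsetC1 (T : finType) (A : {set T}) x :
  (A \subset [set~ x]) = (x \notin A).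
Proof. by rewrite subsetC sub1set inE. Qed.

Section Group.

Variables (G : Type) (mul : G -> G -> G) (one : G) (inv : G -> G).
Hypothesis G_group : is_group mul one inv.

Local Infix "*" := mul.

Let mulgA x y z : x * (y * z) = x * y * z. Proof. exact: (grp_mulA G_group). Qed.
Let mul1g x : one * x = x. Proof. exact: (grp_mul1g G_group). Qed.
Let mulVg x : inv x * x = one. Proof. exact: (grp_mulVg G_group). Qed.

Lemma mulgV x : x * inv x = one.
Proof.
have -> : x * inv x = inv (inv x) * inv x * (x * inv x) by rewrite mulVg mul1g.
by rewrite -mulgA (mulgA (inv x)) mulVg mul1g mulVg.
Qed.

Lemma mulg1 x : x * one = x.
Proof. by rewrite -(mulVg x) mulgA mulgV mul1g. Qed.

Lemma mulgI : right_injective mul.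
Proof.
by move=> x y z eq_yz; rewrite -(mul1g y) -(mul1g z) -(mulVg x) -!mulgA eq_yz.
Qed.

Lemma mulIg : left_injective mul.
Proof.
by move=> x y z eq_yz; rewrite -(mulg1 y) -(mulg1 z) -(mulgV x) !mulgA eq_yz.
Qed.

Lemma invMg x y : inv (x * y) = inv y * inv x.
Proof.
apply: (@mulgI (x * y)); rewrite mulgV -mulgA (mulgA y) mulgV mul1g.
by rewrite mulgV.
Qed.

Definition gconj h x := h * x * inv h.

Lemma gconj1 h : gconj h one = one.
Proof. by rewrite /gconj mulg1 mulgV. Qed.

Lemma gconjMr h x y : gconj h (x * y) = gconj h x * gconj h y.
Proof. by rewrite /gconj -!mulgA (mulgA (inv h)) mulVg mul1g. Qed.

Lemma gconjMl x y z : gconj (x * y) z = gconj x (gconj y z).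
Proof. by rewrite /gconj invMg !mulgA. Qed.

Lemma gconj_id x y : x * y = y * x -> gconj x y = y.
Proof. by rewrite /gconj => ->; rewrite -mulgA mulgV mulg1. Qed.

Section Products.

Variables (n : nat) (g : 'I_n -> G).
Hypothesis g_comm : forall i j, g i * g j = g j * g i.

Definition prod_seq (s : seq 'I_n) : G := foldr (fun i p => g i * p) one s.

Definition prod_set (A : {set 'I_n}) : G := prod_seq (enum A).

Lemma prod_seq_commute k s : g k * prod_seq s = prod_seq s * g k.
Proof.
elim: s => [|i s IHs] /=; first by rewrite mulg1 mul1g.
by rewrite mulgA g_comm -mulgA IHs mulgA.
Qed.

Lemma prod_seq_rem i s : i \in s -> prod_seq s = g i * prod_seq (rem i s).
Proof.
elim: s => [|j s IHs] //=; rewrite in_cons.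
have [-> //|ne_ij /= i_s] := eqVneq i j.
by rewrite (IHs i_s) mulgA g_comm -mulgA.
Qed.

Lemma prod_setD1 (i : 'I_n) (A : {set 'I_n}) :
  i \in A -> prod_set A = g i * prod_set (A :\ i).
Proof.
move=> iA; rewrite /prod_set (prod_seq_rem (i := i)) ?mem_enum //.
congr (_ * prod_seq _); rewrite rem_filter ?enum_uniq // -filter_predI.
by apply: eq_filter => j; rewrite !inE.
Qed.

Lemma gconj_prod_seq h (s : 'I_n -> 'I_n) r :
  (forall k, gconj h (g k) = g (s k)) ->
  gconj h (prod_seq r) = prod_seq (map s r).
Proof.
move=> h_conj; elim: r => [|i r IHr] /=; first exact: gconj1.
by rewrite gconjMr h_conj IHr.
Qed.

Lemma gconj_prod_set_fixed h (s : 'I_n -> 'I_n) (A : {set 'I_n}) :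
  (forall k, gconj h (g k) = g (s k)) -> {in A, s =1 id} ->
  gconj h (prod_set A) = prod_set A.
Proof.
move=> h_conj s_id; rewrite (gconj_prod_seq _ h_conj) map_id_in //.
by move=> k; rewrite mem_enum; apply: s_id.
Qed.

Hypothesis g_inj : injective g.
Hypothesis g_sym : forall s : 'S_n, exists h, forall k, gconj h (g k) = g (s k).

Lemma prod_set_subset a (A B : {set 'I_n}) : a \notin A -> a \notin B ->
  prod_set A = prod_set B -> A \subset B.
Proof.
move=> aNA aNB eq_AB; apply/subsetP => i iA; apply/negPn/negP => iNB.
have [h h_conj] := g_sym (tperm i a).
have fixed (C : {set 'I_n}) :
    i \notin C -> a \notin C -> gconj h (prod_set C) = prod_set C.
  move=> iNC aNC; apply: (gconj_prod_set_fixed h_conj) => k kC.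
  by apply: tpermD; [apply: contraNneq iNC => -> | apply: contraNneq aNC => ->].
have iNAi : i \notin A :\ i by rewrite setD11.
have aNAi : a \notin A :\ i by rewrite !inE negb_and aNA orbT.
have : g a * prod_set (A :\ i) = g i * prod_set (A :\ i).
  by rewrite -(prod_setD1 iA) eq_AB -(fixed B) // -eq_AB (prod_setD1 iA)
    gconjMr h_conj tpermL fixed.
move/mulIg/g_inj => eq_ai.
by move: aNA; rewrite eq_ai iA.
Qed.

Lemma prod_set_inj a (A B : {set 'I_n}) : a \notin A -> a \notin B ->
  prod_set A = prod_set B -> A = B.
Proof.
move=> aNA aNB eq_AB; apply/eqP; rewrite eqEsubset.
by rewrite (prod_set_subset aNA aNB) ?(prod_set_subset aNB aNA).
Qed.

Variable h : 'S_n -> G.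
Hypothesis h_conj : forall s k, gconj (h s) (g k) = g (s k).

Lemma gconj_mul_prod_set s A k : gconj (h s * prod_set A) (g k) = g (s k).
Proof.
have PA_comm : prod_set A * g k = g k * prod_set A.
  by rewrite /prod_set prod_seq_commute.
by rewrite gconjMl (gconj_id PA_comm) h_conj.
Qed.

Lemma mul_prod_set_inj a :
  {in setX [set: 'S_n] (powerset [set~ a]) &,
    injective (fun p => h p.1 * prod_set p.2)}.
Proof.
move=> [s A] [t B]; rewrite !inE /= !subsetC1 => aNA aNB eq_st.
have eq_s_t : s = t.
  apply/permP => k; apply: g_inj.
  by rewrite -(gconj_mul_prod_set s A) eq_st gconj_mul_prod_set.
by move: eq_st; rewrite eq_s_t => /mulgI/(prod_set_inj aNA aNB) ->.
Qed.

End Products.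

End Group.

Theorem proposition2p2 (G : Type) (mul : G -> G -> G) (one : G) (inv : G -> G)
  (n : nat) (g : 'I_n -> G) :
  is_group mul one inv ->
  1 <= n ->
  totally_symmetric mul inv g ->
  (forall i, exists k, 0 < k /\ gpow mul one (g i) k = one) ->
  card_ge G (2 ^ n.-1 * n`!).
Proof.
move=> G_group n_gt0 [g_inj [g_comm g_sym]] _.
have [h h_conj] := fin_all_exists g_sym.
have lt_pred_n : n.-1 < n by rewrite ltn_predL.
pose a : 'I_n := Ordinal lt_pred_n.
have card_D : #|setX [set: 'S_n] (powerset [set~ a])| = 2 ^ n.-1 * n`!.
  by rewrite cardsX cardsT card_Sn card_powerset cardsC1 card_ord mulnC.
rewrite -card_D; apply: card_ge_injective_in.
exact: (mul_prod_set_inj G_group g_comm g_inj g_sym h_conj).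
Qed.
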